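(* Let $k\ge 2$ and let $W\in\mathcal W^2_{3\times(3k+1)}$ be such that each of its three rows contains exactly $2k+1$ filled cells (equivalently $e(W[1])=e(W[2])=e(W[3])=1/3$). Then the multiset of lengths of the maximal horizontal pillars of the middle row $W[2]$ is either $\{2,2,\dots,2,1\}$ ($k$ parts equal to $2$ and one part equal to $1$) or $\{3,2,\dots,2,1,1\}$ (one part $3$, $k-2$ parts $2$, and two parts $1$).
   Context: A 2-dimensional binary word of dimensions $h\times w$ is an $h\times w$ matrix with entries in $\{\square,\blacksquare\}$ (filled cells $\blacksquare$, empty cells $\square$); $|U|_\blacksquare$ is the number of filled cells of $U$. Two cells $(i,j),(i',j')$ are adjacent if $|i-i'|+|j-j'|=1$; the degree of a filled cell is the number of filled cells adjacent to it. $\mathcal W^2_{h\times w}$ is the set of $h\times w$ binary words in which every filled cell has degree at most $2$. $W[i]$ denotes row $i$ of $W$. The excess of an $a\times b$ word $U$ is $e(U)=|U|_\blacksquare-2ab/3$. A maximal horizontal pillar of a row is a maximal run of consecutive filled cells in that row. *)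

From mathcomp Require Import all_boot.
Set Implicit Arguments. Unset Strict Implicit. Unset Printing Implicit Defensive.

(* A 2-dimensional binary word of dimensions h x w: a finite function row -> column -> bool,
   true = filled cell, false = empty cell. Rows/columns indexed from 0. *)
Definition bword (h w : nat) := {ffun 'I_h -> {ffun 'I_w -> bool}}.

Definition cell (h w : nat) (W : bword h w) (i j : nat) : bool :=
  match @insub nat (fun x => x < h) 'I_h i, @insub nat (fun x => x < w) 'I_w j with
  | Some i', Some j' => W i' j'
  | _, _ => false
  end.

Definition degree (h w : nat) (W : bword h w) (i j : nat) : nat :=
  cell W i j.+1 + ((0 < j) && cell W i j.-1)
  + cell W i.+1 j + ((0 < i) && cell W i.-1 j).

Definition in_W2 (h w : nat) (W : bword h w) : Prop :=
  forall i j, cell W i j -> degree W i j <= 2.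

Definition row_filled (h w : nat) (W : bword h w) (i : 'I_h) : nat :=
  #|[pred j : 'I_w | W i j]|.

Definition max_pillar (h w : nat) (W : bword h w) (i a b : nat) : bool :=
  [&& a <= b, b < w,
      [forall j : 'I_w, (a <= j <= b) ==> cell W i j],
      (a == 0) || ~~ cell W i a.-1
    & ~~ cell W i b.+1].

Definition pillar_lengths (h w : nat) (W : bword h w) (i : nat) : seq nat :=
  [seq (nat_of_ord p.2 - nat_of_ord p.1).+1
     | p <- enum [pred p : 'I_w * 'I_w | max_pillar W i p.1 p.2]].

From mathcomp Require Import all_boot zify.
Set Implicit Arguments. Unset Strict Implicit. Unset Printing Implicit Defensive.

(* Each row fills 2k+1 of the 3k+1 columns, so row 1 meets rows 0 and 2 in at least k+1
   columns each.  Such a common cell is a vertical neighbour of a cell of row 1, and in a word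
   of W^2 a maximal pillar has at most two vertical neighbours altogether; as every pillar is
   followed by an empty cell, row 1 has at most k+1 pillars.  Hence all these bounds are tight:
   row 1 has k+1 pillars of total length 2k+1, rows 0 and 1 cover every column, and every
   pillar has exactly two vertical neighbours.  A pillar of length 1 away from the border
   would then lie below a cell of row 0 with both horizontal neighbours filled, which has
   degree 3; so at most two parts equal 1, and counting leaves the two profiles. *)


Lemma sum_nat_of_bool (T : finType) (P Q : pred T) :
  \sum_(x | P x) (Q x : nat) = #|[set x | P x && Q x]|.
Proof.
by rewrite -sum1dep_card big_mkcondr; apply: eq_bigr => x _; case: (Q x).
Qed.

Lemma sum_ord_eq_le1 n (P : pred 'I_n) a : \sum_(j | P j) (j == a :> nat) <= 1.
Proof.
rewrite sum_nat_of_bool; apply/card_le1_eqP => x y.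
by rewrite !inE => /andP[_ /eqP xa] /andP[_ /eqP ya]; apply: val_inj => /=; rewrite xa ya.
Qed.

Lemma sum_ord_interval n a b : \sum_(j < n | a <= j <= b) 1 = minn n b.+1 - a.
Proof.
rewrite big_mkcond; elim: n => [|n IH]; first by rewrite big_ord0.
by rewrite big_ord_recr /= IH; case: (leqP a n); case: (leqP n b) => /=; lia.
Qed.

Lemma run_left_end (f : pred nat) j : f j ->
  exists a, [/\ a <= j, forall y, a <= y <= j -> f y & (a == 0) || ~~ f a.-1].
Proof.
elim: j => [|j IH] fj.
  by exists 0; split=> // y /andP[_]; rewrite leqn0 => /eqP ->.
case fj': (f j).
- have [a [aj fa ea]] := IH fj'; exists a; split=> //; first exact: leqW.
  move=> y /andP[ay]; rewrite leq_eqVlt => /orP[/eqP -> // | yj].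
  by apply: fa; rewrite ay.
- exists j.+1; split=> //=; last by rewrite fj'.
  by move=> y yj; have -> : y = j.+1 by lia.
Qed.

Lemma run_right_end (f : pred nat) n j : (forall y, n <= y -> ~~ f y) -> f j ->
  exists b, [/\ j <= b, forall y, j <= y <= b -> f y & ~~ f b.+1].
Proof.
move=> out; move Ed: (n - j) => d; elim: d j Ed => [|d IH] j Ed fj.
  by move: (out j); rewrite fj; lia.
case fj': (f j.+1).
- have [b [jb fb eb]] := IH j.+1 ltac:(lia) fj'; exists b; split=> //; first exact: ltnW.
  move=> y /andP[]; rewrite leq_eqVlt => /orP[/eqP <- // | jy] yb.
  by apply: fb; rewrite jy.
- exists j; split=> //; last by rewrite fj'.
  by move=> y yj; have -> : y = j by lia.
Qed.

Lemma cellE h w (W : bword h w) (i : 'I_h) (j : 'I_w) : cell W i j = W i j.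
Proof.
rewrite /cell; case: insubP => [i' _ /val_inj -> | ]; last by rewrite ltn_ord.
by case: insubP => [j' _ /val_inj -> | ]; last by rewrite ltn_ord.
Qed.

Section Pillars.

Variables (h w : nat) (W : bword h w) (i : nat).

Definition row_cells : {set 'I_w} := [set j : 'I_w | cell W i j].

Definition pillars : {set 'I_w * 'I_w} := [set p : 'I_w * 'I_w | max_pillar W i p.1 p.2].

Lemma cell_lt_width (j : nat) : cell W i j -> j < w.
Proof.
by rewrite /cell; case: insubP => // i' _ _; case: insubP => // j' ->.
Qed.

Lemma max_pillarP a b :
  max_pillar W i a b <->
  [/\ a <= b, b < w, forall j, a <= j <= b -> cell W i j,
      (a == 0) || ~~ cell W i a.-1 & ~~ cell W i b.+1].
Proof.
split=> [/and5P[ab bw /forallP fab ea eb] | [ab bw fab ea eb]].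
  split=> // j jab; have jw : j < w by case/andP: jab => _ /leq_ltn_trans; apply.
  by move/implyP: (fab (Ordinal jw)); apply.
by apply/and5P; split=> //; apply/forallP => j; apply/implyP/fab.
Qed.

Lemma max_pillar_overlap a b a' b' j :
  max_pillar W i a b -> max_pillar W i a' b' ->
  a <= j <= b -> a' <= j <= b' -> a <= a' /\ b' <= b.
Proof.
move=> /max_pillarP[_ _ _ ea eb] /max_pillarP[_ _ fab' _ _] jab jab'.
split; rewrite leqNgt; apply/negP => lt.
- have : cell W i a.-1 by apply: fab'; lia.
  have a0 : (a == 0) = false by lia.
  by rewrite a0 /= in ea; rewrite (negbTE ea).
- have : cell W i b.+1 by apply: fab'; lia.
  by rewrite (negbTE eb).
Qed.

Lemma pillars_overlap_eq p q j : p \in pillars -> q \in pillars ->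
  p.1 <= j <= p.2 -> q.1 <= j <= q.2 -> p = q.
Proof.
rewrite !inE => pP qP jp jq.
have [pq1 qp2] := max_pillar_overlap pP qP jp jq.
have [qp1 pq2] := max_pillar_overlap qP pP jq jp.
by case: p q {pP qP jp jq} pq1 qp2 qp1 pq2 => [p1 p2] [q1 q2] /= *;
  congr pair; apply: val_inj; apply/eqP; rewrite eqn_leq; apply/andP.
Qed.

Lemma pillars_start_inj p q : p \in pillars -> q \in pillars -> p.1 = q.1 :> nat -> p = q.
Proof.
move=> pP qP e; apply: (pillars_overlap_eq (j := p.1)) => //.
  by rewrite leqnn; move: pP; rewrite inE => /max_pillarP[].
by rewrite e leqnn; move: qP; rewrite inE => /max_pillarP[].
Qed.

Lemma pillars_end_inj p q : p \in pillars -> q \in pillars -> p.2 = q.2 :> nat -> p = q.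
Proof.
move=> pP qP e; apply: (pillars_overlap_eq (j := p.2)) => //.
  by rewrite leqnn andbT; move: pP; rewrite inE => /max_pillarP[].
by rewrite e leqnn andbT; move: qP; rewrite inE => /max_pillarP[].
Qed.

Lemma pillars_cover (j : nat) : cell W i j -> exists2 p, p \in pillars & p.1 <= j <= p.2.
Proof.
move=> fj; have [a [aj fa ea]] := run_left_end fj.
have out y : w <= y -> ~~ cell W i y.
  by move=> wy; apply/negP => /cell_lt_width; rewrite ltnNge wy.
have [b [jb fb eb]] := run_right_end out fj.
have fab y : a <= y <= b -> cell W i y.
  by case: (leqP y j) => yj /andP[ay yb]; [apply: fa | apply: fb]; lia.
have bw : b < w by apply: cell_lt_width; apply: fab; lia.
exists (Ordinal (leq_ltn_trans (leq_trans aj jb) bw), Ordinal bw); rewrite ?aj ?jb //.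
by rewrite inE; apply/max_pillarP; split=> //=; exact: leq_trans jb.
Qed.

Lemma card_pillars_at (j : nat) : #|[set p in pillars | p.1 <= j <= p.2]| = cell W i j.
Proof.
case fj: (cell W i j) => /=.
  have [p pP jp] := pillars_cover fj; rewrite -(cards1 p); apply: eq_card => q.
  rewrite in_set in_set1; apply/andP/eqP => [[qP jq] | ->]; last by split.
  exact: pillars_overlap_eq jp.
apply/eqP; rewrite cards_eq0; apply/eqP/setP => p; rewrite !inE.
by apply/negP => /andP[/max_pillarP[_ _ fp _ _] /fp]; rewrite fj.
Qed.

Lemma sum_row_pillars (F : 'I_w -> nat) :
  \sum_(j in row_cells) F j = \sum_(p in pillars) \sum_(j : 'I_w | p.1 <= j <= p.2) F j.
Proof.
rewrite (exchange_big_dep predT) //= big_mkcond; apply: eq_bigr => j _.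
rewrite sum_nat_cond_const card_pillars_at inE.
by case: (cell W i j); rewrite ?mul1n ?mul0n.
Qed.

Lemma card_row_cells_widen : #|[set j : 'I_w.+1 | cell W i j]| = #|row_cells|.
Proof.
have widen_inj : injective (widen_ord (leqnSn w)) by move=> x y /(congr1 val) /= /val_inj.
rewrite -(card_imset _ widen_inj); apply: eq_card => j.
rewrite inE; apply/idP/imsetP => [cj | [j' j'P ->]].
  by exists (Ordinal (cell_lt_width cj)); rewrite ?inE //; apply: val_inj.
by rewrite inE in j'P.
Qed.

(* Each pillar is followed by an empty cell, possibly the virtual column [w]. *)
Lemma card_pillars_le : #|pillars| <= w.+1 - #|row_cells|.
Proof.
pose next (p : 'I_w * 'I_w) : 'I_w.+1 := inord p.2.+1.
have nextE p : next p = p.2.+1 :> nat by rewrite inordK // ltnS.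
rewrite -(card_in_imset (f := next)); last first.
  move=> p q pP qP e; apply: pillars_end_inj => //.
  by have := congr1 (@nat_of_ord _) e; rewrite !nextE => -[].
have card_empty : #|~: [set j : 'I_w.+1 | cell W i j]| = w.+1 - #|row_cells|.
  by rewrite -card_row_cells_widen; have := cardsC [set j : 'I_w.+1 | cell W i j];
    rewrite card_ord; lia.
rewrite -card_empty.
apply: subset_leq_card; apply/subsetP => _ /imsetP[p pP ->].
by rewrite !inE nextE; move: pP; rewrite inE => /max_pillarP[].
Qed.

Lemma pillar_lengthsE :
  pillar_lengths W i = [seq (p.2 - p.1).+1 | p : 'I_w * 'I_w <- enum pillars].
Proof. by congr map; apply: eq_enum => p; rewrite !inE. Qed.

Lemma size_pillar_lengths : size (pillar_lengths W i) = #|pillars|.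
Proof. by rewrite pillar_lengthsE size_map -cardE. Qed.

Lemma pillar_lengths_neq0 : 0 \notin pillar_lengths W i.
Proof. by rewrite pillar_lengthsE; apply/mapP => -[]. Qed.

Lemma sumn_pillar_lengths : sumn (pillar_lengths W i) = #|row_cells|.
Proof.
rewrite pillar_lengthsE sumnE big_map big_enum -sum1_card sum_row_pillars /=.
apply: eq_bigr => p; rewrite inE => /max_pillarP[ab bw _ _ _].
rewrite sum_ord_interval; lia.
Qed.

End Pillars.

(* Inner cells of a pillar already have two horizontal neighbours, and its end cells one. *)
Lemma pillar_vertical_le h w (W : bword h w) i p :
  in_W2 W -> p \in pillars W i.+1 ->
  \sum_(j : 'I_w | p.1 <= j <= p.2) (cell W i j + cell W i.+2 j) <= 2.
Proof.
case: p => a b W2; rewrite inE /= => /max_pillarP[_ _ fab _ _].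
have bound (j : 'I_w) : a <= j <= b ->
    cell W i j + cell W i.+2 j <= (j == a :> nat) + (j == b :> nat).
  move=> jab; have /andP[aj jb] := jab; have := W2 i.+1 j (fab _ jab); rewrite /degree /=.
  have next_filled : j < b -> cell W i.+1 j.+1.
    by move=> jb'; apply: fab; apply/andP; split; lia.
  have prev_filled : a < j -> (0 < j) && cell W i.+1 j.-1.
    by move=> aj'; rewrite (leq_ltn_trans _ aj') //=; apply: fab; apply/andP; split; lia.
  move: next_filled prev_filled; case: (cell W i.+1 j.+1); case: (_ && _);
    case: (cell W i j); case: (cell W i.+2 j) => /=; lia.
rewrite (leq_trans (leq_sum _ bound)) // big_split /=.
by rewrite -[2]/(1 + 1) leq_add ?sum_ord_eq_le1.
Qed.

Lemma sumn_lb_no_two (r : seq nat) :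
  0 \notin r -> 2 \notin r -> 3 * size r <= sumn r + 2 * count (pred1 1) r.
Proof.
elim: r => //= x r IH; rewrite !inE !negb_or => /andP[x0 r0] /andP[x2 r2].
by move: (IH r0 r2) x0 x2; rewrite /= -!(eq_sym x); case: eqP => /=; lia.
Qed.

Lemma non_two_profile (r : seq nat) :
  0 \notin r -> 2 \notin r -> count (pred1 1) r <= 2 -> sumn r + 1 = 2 * size r ->
  perm_eq r [:: 1] \/ perm_eq r [:: 3; 1; 1].
Proof.
move=> r0 r2 c1 sr; have := sumn_lb_no_two r0 r2; move: r0 r2 c1 sr.
case: r => [|x [|y [|z [|t r]]]] //=; rewrite ?addn0 ?inE ?negb_or.
- by move=> _ _ _ sr _; left; rewrite (_ : x = 1) //; lia.
- by move=> /andP[/eqP ? /eqP ?] /andP[/eqP ? /eqP ?] _ sr _; lia.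
- move=> /and3P[/eqP ? /eqP ? /eqP ?] /and3P[/eqP ? /eqP ? /eqP ?] c1 sr _.
  have hx : x = 1 \/ x = 3 by lia.
  have hy : y = 1 \/ y = 3 by lia.
  have hz : z = 1 \/ z = 3 by lia.
  by case: hx hy hz c1 sr => -> [] -> [] -> c1 sr; try lia; right.
- by move=> _ _ c1 sr ge; lia.
Qed.

Lemma lengths_profile (k : nat) (s : seq nat) :
  2 <= k -> 0 \notin s -> size s = k.+1 -> sumn s = 2 * k + 1 ->
  count (pred1 1) s <= 2 ->
  perm_eq s (rcons (nseq k 2) 1) \/ perm_eq s (3 :: nseq (k - 2) 2 ++ [:: 1; 1]).
Proof.
move=> k2 s0 size_s sum_s c1.
set twos : seq nat := filter (pred1 2) s.
set r : seq nat := filter (predC (pred1 2)) s.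
have s_split : perm_eq s (twos ++ r) by rewrite perm_sym perm_filterC.
have twosE : twos = nseq (size twos) 2 by apply/all_pred1P; rewrite filter_all.
have size_split : size s = size twos + size r by rewrite (perm_size s_split) size_cat.
have sum_split : sumn s = 2 * size twos + sumn r.
  by rewrite (perm_sumn s_split) sumn_cat {1}twosE sumn_nseq mulnC.
have r0 : 0 \notin r by rewrite mem_filter negb_and s0 orbT.
have r2 : 2 \notin r by rewrite mem_filter; apply/negP => /andP[].
have rc1 : count (pred1 1) r <= 2.
  by apply: leq_trans c1; rewrite count_filter; apply: sub_count => x /andP[].
have [r1|r311] := non_two_profile r0 r2 rc1 ltac:(lia); [left | right].
- apply: (perm_trans s_split); rewrite twosE -cats1 (_ : size twos = k).
    by rewrite perm_cat2l r1.
  by have /= : size r = size [:: 1] := perm_size r1; lia.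
- apply: (perm_trans s_split); rewrite twosE (_ : size twos = k - 2).
    apply: perm_trans (perm_cat (perm_refl _) r311) _.
    by rewrite -cat1s perm_catCA.
  by have /= : size r = size [:: 3; 1; 1] := perm_size r311; lia.
Qed.

Section ThreeRows.

Variables (k : nat) (W : bword 3 (3 * k + 1)).
Hypothesis W2 : in_W2 W.
Hypothesis rows_filled : forall i : 'I_3, row_filled W i = 2 * k + 1.

Local Notation w := (3 * k + 1).

Let vertical (p : 'I_w * 'I_w) :=
  \sum_(j : 'I_w | p.1 <= j <= p.2) (cell W 0 j + cell W 2 j).

Lemma card_row_cells i : i < 3 -> #|row_cells W i| = 2 * k + 1.
Proof.
move=> i3; rewrite -(rows_filled (Ordinal i3)); apply: eq_card => j.
by rewrite !inE -(cellE W (Ordinal i3) j).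
Qed.

Lemma card_overlap_middle i : i < 3 -> k.+1 <= #|row_cells W i :&: row_cells W 1|.
Proof.
move=> i3; have := cardsUI (row_cells W i) (row_cells W 1).
have := max_card (row_cells W i :|: row_cells W 1).
by rewrite card_ord !card_row_cells //; lia.
Qed.

Lemma middle_row_tight :
  [/\ #|pillars W 1| = k.+1, #|row_cells W 0 :&: row_cells W 1| = k.+1
    & \sum_(p in pillars W 1) vertical p = #|pillars W 1| * 2].
Proof.
have by_cells : \sum_(p in pillars W 1) vertical p
    = #|row_cells W 0 :&: row_cells W 1| + #|row_cells W 2 :&: row_cells W 1|.
  rewrite -sum_row_pillars big_split /= !sum_nat_of_bool.
  by congr (_ + _); apply: eq_card => j; rewrite !inE andbC.
have by_pillars : \sum_(p in pillars W 1) vertical p <= #|pillars W 1| * 2.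
  by rewrite -sum_nat_const; apply: leq_sum => p; apply: pillar_vertical_le.
have := card_pillars_le W 1; have := card_overlap_middle (isT : 0 < 3).
have := card_overlap_middle (isT : 2 < 3).
by rewrite card_row_cells // => *; split; lia.
Qed.

Lemma rows01_cover j : j < w -> cell W 0 j || cell W 1 j.
Proof.
move=> jw; have [_ overlap _] := middle_row_tight.
have : row_cells W 0 :|: row_cells W 1 = setT.
  apply/eqP; rewrite eqEcard subsetT cardsT card_ord.
  by have := cardsUI (row_cells W 0) (row_cells W 1); rewrite !card_row_cells // overlap; lia.
by move/setP/(_ (Ordinal jw)); rewrite !inE.
Qed.

Lemma pillar_vertical_full (p : 'I_w * 'I_w) : p \in pillars W 1 -> vertical p = 2.
Proof.
have [_ _ tight] := middle_row_tight.
have le2 q : q \in pillars W 1 -> vertical q <= 2 ?= iff (vertical q == 2).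
  by move=> qP; apply/leqif_eq/pillar_vertical_le.
have [_] := leqif_sum le2.
rewrite sum_nat_const tight eqxx => /esym/forall_inP full pP.
exact/eqP/full.
Qed.

Lemma singleton_pillar_border (p : 'I_w * 'I_w) :
  p \in pillars W 1 -> p.1 = p.2 :> nat -> (p.1 : nat) \in [:: 0; w.-1].
Proof.
move=> pP p12; have full := pillar_vertical_full pP.
move: (pP); rewrite inE => /max_pillarP[_ bw fp start_p end_p].
rewrite /vertical (big_pred1 p.1) in full; last first.
  by move=> j; rewrite /= -p12 -val_eqE eqn_leq andbC.
have c0 : cell W 0 p.1 by move: full; case: (cell W 0 p.1); case: (cell W 2 p.1).
rewrite !inE; case: (posnP p.1) => [-> // | pos].
have : p.1 < w by rewrite p12.
rewrite leq_eqVlt => /orP[/eqP e | lt]; first by apply/orP; right; apply/eqP; lia.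
have prev_empty : ~~ cell W 1 p.1.-1 by move: start_p; rewrite eqn0Ngt pos.
have next_empty : ~~ cell W 1 p.1.+1 by rewrite p12.
have prev0 : cell W 0 p.1.-1.
  have := rows01_cover (leq_ltn_trans (leq_pred _) (ltn_ord p.1)).
  by rewrite (negbTE prev_empty) orbF.
have next0 : cell W 0 p.1.+1 by have := rows01_cover lt; rewrite (negbTE next_empty) orbF.
have c1 : cell W 1 p.1 by apply: fp; rewrite -p12 leqnn.
by have := W2 c0; rewrite /degree prev0 next0 c1 pos.
Qed.

Lemma count_singleton_pillars : count (pred1 1) (pillar_lengths W 1) <= 2.
Proof.
rewrite pillar_lengthsE count_map -size_filter.
rewrite -(size_map (fun p : 'I_w * 'I_w => p.1 : nat)).
apply: (@uniq_leq_size _ _ [:: 0; w.-1]).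
  rewrite map_inj_in_uniq; first exact/filter_uniq/enum_uniq.
  move=> p q.
  rewrite mem_filter mem_enum => /andP[_ pP]; rewrite mem_filter mem_enum => /andP[_ qP].
  exact: pillars_start_inj pP qP.
move=> x /mapP[p]; rewrite mem_filter mem_enum => /andP[len1 pP] ->.
have /max_pillarP[ab _ _ _ _] : max_pillar W 1 p.1 p.2 by rewrite inE in pP.
by apply: singleton_pillar_border pP _; apply/eqP; rewrite eqn_leq ab -subn_eq0 -eqSS.
Qed.

End ThreeRows.

Theorem mainTheorem12 (k : nat) (W : bword 3 (3 * k + 1)) :
  2 <= k ->
  in_W2 W ->
  (forall i : 'I_3, row_filled W i = 2 * k + 1) ->
  perm_eq (pillar_lengths W 1) (rcons (nseq k 2) 1)
  \/ perm_eq (pillar_lengths W 1) (3 :: nseq (k - 2) 2 ++ [:: 1; 1]).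
Proof.
move=> k2 W2 rows_filled.
have [card_pillars _ _] := middle_row_tight W2 rows_filled.
apply: lengths_profile => //.
- exact: pillar_lengths_neq0.
- by rewrite size_pillar_lengths card_pillars.
- by rewrite sumn_pillar_lengths card_row_cells.
- exact: count_singleton_pillars.
Qed.
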